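(* Let $L$ be a finite-dimensional Lie algebra over a field $K$ of characteristic $\neq 2$ such that $\mathrm{HomLie}(L)$ is closed with respect to the anticommutator $\varphi * \psi = \frac12(\varphi\circ\psi+\psi\circ\varphi)$. Then one of the following holds: (i) $\mathrm{HomLie}(L)$, as a Jordan algebra with respect to $*$, is a semisimple Jordan algebra without nonzero nilpotent elements; (ii) there are nonzero subspaces $A, B$ of $L$ such that $A \subseteq B$, $\dim A + \dim B = \dim L$, $[[A,A],B] = 0$ and $[[B,B],A] = 0$. Moreover, if $K$ is algebraically closed, then condition (i) can be replaced by the condition: (i)$'$ the Jordan algebra $\mathrm{HomLie}(L)$ is isomorphic to the direct sum of several copies of $K$.
   Context: A Hom-Lie structure on a Lie algebra $L$ is a linear map $\varphi: L \to L$ satisfying $[[x,y],\varphi(z)] + [[z,x],\varphi(y)] + [[y,z],\varphi(x)] = 0$ for all $x,y,z \in L$. $\mathrm{HomLie}(L)$ is the vector space of all Hom-Lie structures on $L$. *)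

From HB Require Import structures.
From mathcomp Require Import all_boot all_order all_algebra.
Set Implicit Arguments. Unset Strict Implicit. Unset Printing Implicit Defensive.
Import Order.TTheory GRing.Theory Num.Theory.
Local Open Scope ring_scope.

Section Defs.
Variables (K : fieldType) (V : vectType K).

Definition is_lie (br : V -> V -> V) : Prop :=
  [/\ (forall a x y z, br (a *: x + y) z = a *: br x z + br y z),
      (forall a x y z, br z (a *: x + y) = a *: br z x + br z y),
      (forall x, br x x = 0) &
      (forall x y z, br x (br y z) + br y (br z x) + br z (br x y) = 0)].

Definition is_homlie (br : V -> V -> V) (phi : 'End(V)) : Prop :=
  forall x y z,
    br (br x y) (phi z) + br (br z x) (phi y) + br (br y z) (phi x) = 0.

Definition jmul (phi psi : 'End(V)) : 'End(V) :=
  2%:R^-1 *: ((phi \o psi)%VF + (psi \o phi)%VF).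

(* Jordan powers: jpow n phi = phi^(n+1), with phi^(k+1) = phi * phi^k. *)
Definition jpow (n : nat) (phi : 'End(V)) : 'End(V) := iter n (jmul phi) phi.

Definition jprodv (U W : {vspace 'End(V)}) : {vspace 'End(V)} :=
  (\sum_(u <- vbasis U) \sum_(w <- vbasis W) <[jmul u w]>)%VS.

Definition homlie_ideal (br : V -> V -> V) (I : {vspace 'End(V)}) : Prop :=
  (forall f, f \in I -> is_homlie br f) /\
  (forall f g, f \in I -> is_homlie br g -> jmul f g \in I).

Definition jderived (n : nat) (I : {vspace 'End(V)}) : {vspace 'End(V)} :=
  iter n (fun J => jprodv J J) I.

Definition jsolvable (I : {vspace 'End(V)}) : Prop :=
  exists n, jderived n I = 0%VS.

(* semisimple: the (solvable) radical is zero, i.e. no nonzero solvable ideal *)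
Definition homlie_semisimple (br : V -> V -> V) : Prop :=
  forall I, homlie_ideal br I -> jsolvable I -> I = 0%VS.

Definition homlie_no_nilpotent (br : V -> V -> V) : Prop :=
  forall f, is_homlie br f -> (exists n, jpow n f = 0) -> f = 0.

Definition homlie_iso_Kn (br : V -> V -> V) : Prop :=
  exists n (Phi : 'End(V) -> 'rV[K]_n),
    [/\ (forall a f g, is_homlie br f -> is_homlie br g ->
            Phi (a *: f + g) = a *: Phi f + Phi g),
        (forall f g, is_homlie br f -> is_homlie br g -> Phi f = Phi g -> f = g),
        (forall r, exists f, is_homlie br f /\ Phi f = r) &
        (forall f g, is_homlie br f -> is_homlie br g ->
            Phi (jmul f g) = \row_i (Phi f 0 i * Phi g 0 i))].

Definition cond_ii (br : V -> V -> V) : Prop :=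
  exists A B : {vspace V},
    [/\ A != 0%VS /\ B != 0%VS, (A <= B)%VS,
        (\dim A + \dim B = \dim {:V})%N,
        (forall a a' b, a \in A -> a' \in A -> b \in B -> br (br a a') b = 0) &
        (forall b b' a, b \in B -> b' \in B -> a \in A -> br (br b b') a = 0)].

End Defs.

From HB Require Import structures.
From mathcomp Require Import all_boot all_order all_algebra.
From mathcomp Require Import zify.
From Stdlib Require Import Classical.
Import Order.TTheory GRing.Theory Num.Theory.
Local Open Scope ring_scope.
Set Implicit Arguments. Unset Strict Implicit. Unset Printing Implicit Defensive.

(* If some nonzero Hom-Lie structure [psi] has [psi \o psi = 0], then [A = im psi]
   and [B = ker psi] satisfy (ii).  Otherwise HomLie(L) is a subspace of End(L)
   that is closed under squares ([f * f = f \o f]) and reduced ([f \o f = 0] forces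
   [f = 0]); hence it has no nilpotents, and no nonzero solvable ideal since the
   Jordan square of an ideal contains [f \o f] for each basis vector [f].
   Over an algebraically closed field, such a subspace [H] with a unit [u] is
   spanned by orthogonal idempotents, by induction on its dimension: an element
   outside [K u] yields, through a polynomial relation, an idempotent [e <> 0, u];
   the Peirce corners [e H e] and [e' H e'] ([e' = u - e]) are smaller, and
   [e H e' = 0] because [a h b = 0] for orthogonal absolutely primitive idempotents
   [a], [b] of a reduced [H].  Coordinates in such a basis identify HomLie(L)
   with [K^n]. *)

Local Notation "f ** g" := (comp_lfun f g) (at level 40, left associativity).

Section LieBracket.
Variables (K : fieldType) (V : vectType K) (br : V -> V -> V).
Hypothesis br_lie : is_lie br.

Lemma br_linl a x y z : br (a *: x + y) z = a *: br x z + br y z.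
Proof. by case: br_lie. Qed.

Lemma br_linr a x y z : br z (a *: x + y) = a *: br z x + br z y.
Proof. by case: br_lie. Qed.

Lemma br_jacobi x y z : br x (br y z) + br y (br z x) + br z (br x y) = 0.
Proof. by case: br_lie. Qed.

Lemma br_addl x y z : br (x + y) z = br x z + br y z.
Proof. by rewrite -[x]scale1r br_linl !scale1r. Qed.

Lemma br_addr x y z : br z (x + y) = br z x + br z y.
Proof. by rewrite -[x]scale1r br_linr !scale1r. Qed.

Lemma br0r z : br z 0 = 0.
Proof. by apply: (@addrI _ (br z 0)); rewrite -br_addr !addr0. Qed.

Lemma br_anti x y : br x y = - br y x.
Proof.
have [_ _ br_alt _] := br_lie.
apply/eqP; rewrite -addr_eq0; apply/eqP.
by have := br_alt (x + y); rewrite br_addl !br_addr !br_alt add0r addr0.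
Qed.

Lemma br_oppl x y : br (- x) y = - br x y.
Proof. by apply/eqP; rewrite -addr_eq0 -br_addl addNr br_anti br0r oppr0. Qed.

Lemma homlie0 : is_homlie br 0.
Proof. by move=> x y z; rewrite !lfunE /= !br0r !addr0. Qed.

Lemma homlie_lin a f g : is_homlie br f -> is_homlie br g -> is_homlie br (a *: f + g).
Proof.
move=> hf hg x y z; rewrite !lfunE /= !lfunE /= !br_linr.
by rewrite (addrACA (a *: _)) (addrACA (a *: _ + a *: _)) -!scalerDr hf hg scaler0 addr0.
Qed.

Lemma homlie_id : is_homlie br \1%VF.
Proof.
move=> x y z; rewrite !id_lfunE (br_anti (br x y)) (br_anti (br z x)) (br_anti (br y z)).
by rewrite -!opprD addrC addrCA addrA br_jacobi oppr0.
Qed.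

Lemma cond_ii_of_sqr0 (psi : 'End(V)) :
  is_homlie br psi -> psi != 0 -> psi ** psi = 0 -> cond_ii br.
Proof.
move=> hpsi psi_neq0 psi2.
have psi2E v : psi (psi v) = 0 by rewrite -comp_lfunE psi2 lfunE.
have imKer : (limg psi <= lker psi)%VS.
  by apply/subvP => _ /memv_imgP [v _ ->]; rewrite memv_ker psi2E.
have im_neq0 : limg psi != 0%VS.
  apply: contraNneq psi_neq0 => im0; apply/eqP/lfunP => v; rewrite lfunE /=.
  by apply/eqP; rewrite -memv0 -im0 memv_img ?memvf.
have kerB b u v : b \in lker psi -> br (br b (psi u)) (psi v) = 0.
  rewrite memv_ker => /eqP psib.
  by have := hpsi (psi u) v b; rewrite psib psi2E !br0r add0r addr0.
exists (limg psi), (lker psi); split.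
- by split=> //; apply: contraNneq im_neq0 => ker0; rewrite -subv0 -ker0.
- exact: imKer.
- by rewrite addnC -(limg_ker_dim psi fullv) capfv.
- move=> _ _ b /memv_imgP [u _ ->] /memv_imgP [u' _ ->] bB.
  have := br_jacobi b (psi u) (psi u').
  rewrite (br_anti (psi u') (br b _)) kerB // oppr0 addr0.
  rewrite (br_anti (psi u) (br _ b)) (br_anti (psi u') b) br_oppl opprK kerB //.
  by rewrite addr0 br_anti => /eqP; rewrite oppr_eq0 => /eqP.
- move=> b b' _ bB b'B /memv_imgP [u _ ->].
  move: bB b'B; rewrite !memv_ker => /eqP psib /eqP psib'.
  by have := hpsi b b' u; rewrite psib psib' !br0r !addr0.
Qed.

End LieBracket.

Lemma ltn_dimv (K : fieldType) (vT : vectType K) (U W : {vspace vT}) w :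
  (U <= W)%VS -> w \in W -> w \notin U -> (\dim U < \dim W)%N.
Proof.
move=> sUW wW wU; rewrite (ltn_leqif (dimv_leqif_sup sUW)).
by apply: contra wU => /subvP; apply.
Qed.

Lemma vspace_of_linear_pred (K : fieldType) (vT : vectType K) (P : vT -> Prop) :
  P 0 -> (forall a u v, P u -> P v -> P (a *: u + v)) ->
  exists U : {vspace vT}, forall v, v \in U <-> P v.
Proof.
move=> P0 Plin.
have maximal (U : {vspace vT}) : {in U, forall v, P v} -> ~ (exists2 v, P v & v \notin U) ->
    exists U : {vspace vT}, forall v, v \in U <-> P v.
  move=> UP noP; exists U => v; split=> [/UP // | Pv].
  by apply: contra_notT noP => vU; exists v.
suff /(_ _ 0%VS (leqnn _)) : forall k (U : {vspace vT}), (\dim {:vT} - \dim U <= k)%N ->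
    {in U, forall v, P v} -> exists U : {vspace vT}, forall v, v \in U <-> P v.
  by apply=> v; rewrite memv0 => /eqP ->.
elim=> [|k IHk] U codimU UP.
all: have [[v Pv vU] | ] := classic (exists2 v, P v & v \notin U); last exact: maximal.
  have /eqP fullU : (U == fullv)%VS by rewrite eqEdim subvf -subn_eq0 -leqn0.
  by rewrite fullU memvf in vU.
have ltUv : (\dim U < \dim (U + <[v]>))%N.
  exact: ltn_dimv (addvSl _ _) (subvP (addvSr _ _) _ (memv_line v)) vU.
apply: (IHk (U + <[v]>)%VS); first by move: (dimvS (subvf (U + <[v]>))) ltUv codimU; lia.
move=> _ /memv_addP [w wU [_ /vlineP [a ->] ->]].
by rewrite addrC; apply: Plin => //; apply: UP.
Qed.

Section JordanPowers.
Variables (K : fieldType) (V : vectType K).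
Hypothesis two_neq0 : (2%:R : K) != 0.
Implicit Types f g : 'End(V).

Lemma jmul_commute f g : f ** g = g ** f -> jmul f g = f ** g.
Proof. by move=> fg; rewrite /jmul -fg -mulr2n -scaler_nat scalerA mulVf ?scale1r. Qed.

Lemma jpowE f n : jpow n f = iter n (comp_lfun f) f.
Proof.
have comm m : f ** iter m (comp_lfun f) f = iter m (comp_lfun f) f ** f.
  by elim: m => //= m IHm; rewrite -comp_lfunA -IHm.
by elim: n => // n IHn; rewrite /jpow !iterS -/(jpow n f) IHn jmul_commute.
Qed.

Lemma jpowS f n : jpow n.+1 f = f ** jpow n f.
Proof. by rewrite !jpowE. Qed.

Lemma jpow_comp f m n : jpow m f ** jpow n f = jpow (m + n).+1 f.
Proof.
elim: m => [|m IHm]; first by rewrite jpowS.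
by rewrite jpowS -comp_lfunA IHm addSn (jpowS f (m + n).+1).
Qed.

Lemma jpow_eq0 f m k : jpow m f = 0 -> (m <= k)%N -> jpow k f = 0.
Proof.
move=> fm0 /subnK <-; elim: (k - m)%N => [|i IHi]; first by rewrite add0n.
by rewrite addSn jpowS IHi comp_lfun0r.
Qed.

End JordanPowers.

Section HomLieJordan.
Variables (K : fieldType) (V : vectType K) (br : V -> V -> V).
Hypothesis two_neq0 : (2%:R : K) != 0.
Hypothesis homlie_jmul :
  forall f g, is_homlie br f -> is_homlie br g -> is_homlie br (jmul f g).
Implicit Types f g : 'End(V).

Definition homlie_reduced :=
  forall f, is_homlie br f -> f ** f = 0 -> f = 0.

Lemma homlie_jpow f n : is_homlie br f -> is_homlie br (jpow n f).
Proof. by move=> hf; elim: n => // n IHn; rewrite /jpow iterS; apply: homlie_jmul. Qed.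

Lemma homlie_sqr f : is_homlie br f -> is_homlie br (f ** f).
Proof. by move=> hf; rewrite -jmul_commute //; apply: homlie_jmul. Qed.

Lemma homlie_no_nilpotent_of_reduced : homlie_reduced -> homlie_no_nilpotent br.
Proof.
move=> red f hf [n]; elim: n => [|n IHn] // fn0; apply: IHn.
apply: red; first exact: homlie_jpow.
by rewrite jpow_comp // (jpow_eq0 two_neq0 fn0) // ltnS leq_addl.
Qed.

Lemma jmul_mem_jprodv (U W : {vspace 'End(V)}) f g :
  f \in vbasis U -> g \in vbasis W -> jmul f g \in jprodv U W.
Proof.
move=> fU gW; rewrite memvE /jprodv (big_rem f fU) (big_rem g gW) /=.
by apply: subv_trans (addvSl _ _); apply: subv_trans (addvSl _ _).
Qed.

Lemma jprodv_sub_ideal (I J : {vspace 'End(V)}) :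
  homlie_ideal br I -> (J <= I)%VS -> (jprodv J J <= I)%VS.
Proof.
move=> [homI idealI] /subvP sJI; rewrite /jprodv big_seq.
elim/big_rec: _ => [|f X /vbasis_mem fJ sXI]; rewrite ?sub0v // subv_add sXI andbT.
rewrite big_seq; elim/big_rec: _ => [|g Y gJ sYI]; first exact: sub0v.
rewrite subv_add sYI andbT -memvE; apply: idealI; first exact: sJI.
exact/homI/sJI/vbasis_mem.
Qed.

Lemma jprodv_eq0 (J : {vspace 'End(V)}) : homlie_reduced ->
  {in J, forall f, is_homlie br f} -> jprodv J J = 0%VS -> J = 0%VS.
Proof.
move=> red homJ JJ0; apply/eqP; rewrite -subv0 -(span_basis (vbasisP J)).
apply/span_subvP => f fB; rewrite memv0; apply/eqP/red; first exact/homJ/vbasis_mem.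
by apply/eqP; rewrite -jmul_commute // -memv0 -JJ0 jmul_mem_jprodv.
Qed.

Lemma homlie_semisimple_of_reduced : homlie_reduced -> homlie_semisimple br.
Proof.
move=> red I idealI [n]; have homI := idealI.1.
suff: forall J, (J <= I)%VS -> jderived n J = 0%VS -> J = 0%VS by apply; apply: subvv.
elim: n => [|n IHn] J sJI //; rewrite /jderived iterSr => /IHn JJ0.
apply: jprodv_eq0 => [//|f /(subvP sJI)/homI //|].
exact/JJ0/jprodv_sub_ideal.
Qed.

End HomLieJordan.

Section CompLfunSum.
Variables (K : fieldType) (V : vectType K).

Lemma comp_lfun_sumr (f : 'End(V)) I (r : seq I) (P : pred I) (F : I -> 'End(V)) :
  f ** (\sum_(i <- r | P i) F i) = \sum_(i <- r | P i) f ** F i.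
Proof. exact: (big_morph _ (comp_lfunDr f) (comp_lfun0r _ f)). Qed.

Lemma comp_lfun_suml (f : 'End(V)) I (r : seq I) (P : pred I) (F : I -> 'End(V)) :
  (\sum_(i <- r | P i) F i) ** f = \sum_(i <- r | P i) F i ** f.
Proof. exact: (big_morph (fun g => g ** f) (fun g h => comp_lfunDl g h f) (comp_lfun0l _ f)). Qed.

End CompLfunSum.

Lemma comp_lfun_sqrD (K : fieldType) (V : vectType K) (f g : 'End(V)) :
  (f + g) ** (f + g) = f ** f + g ** g + (f ** g + g ** f).
Proof. by rewrite comp_lfunDl !comp_lfunDr (addrC (g ** f)) addrACA. Qed.

Section Sandwich.
Variables (K : fieldType) (V : vectType K).

Definition sandwich (e h : 'End(V)) := e ** h ** e.

Fact sandwich_is_linear e : linear (sandwich e).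
Proof. by move=> a x y; rewrite /sandwich comp_lfunDr comp_lfunDl -comp_lfunZr -comp_lfunZl. Qed.

HB.instance Definition _ e :=
  GRing.isLinear.Build K 'End(V) 'End(V) _ (sandwich e) (sandwich_is_linear e).

Definition cornerv e (H : {vspace 'End(V)}) := (linfun (sandwich e) @: H)%VS.

Lemma cornervP e (H : {vspace 'End(V)}) x :
  reflect (exists2 h, h \in H & x = e ** h ** e) (x \in cornerv e H).
Proof.
apply: (iffP memv_imgP) => [] [h hH ->]; exists h; rewrite ?lfunE //.
Qed.

End Sandwich.

Section SquareClosed.
Variables (K : fieldType) (V : vectType K).
Hypothesis two_neq0 : (2%:R : K) != 0.
Implicit Types (H : {vspace 'End(V)}) (a b e g h u : 'End(V)).

Definition sqr_closed H := {in H, forall h, h ** h \in H}.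
Definition reduced H := {in H, forall h, h ** h = 0 -> h = 0}.
Definition is_algid u H := u \in H /\ {in H, forall h, u ** h = h /\ h ** u = h}.

Lemma sqr_closed_jordan H a b :
  sqr_closed H -> a \in H -> b \in H -> a ** b + b ** a \in H.
Proof.
move=> sqH aH bH; have := memvB (sqH _ (memvD aH bH)) (memvD (sqH _ aH) (sqH _ bH)).
by rewrite comp_lfun_sqrD addrC addKr.
Qed.

Lemma sqr_closed_commute H a b :
  sqr_closed H -> a \in H -> b \in H -> a ** b = b ** a -> a ** b \in H.
Proof.
move=> sqH aH bH ab; have := memvZ 2%:R^-1 (sqr_closed_jordan sqH aH bH).
by rewrite -ab -mulr2n -scaler_nat scalerA mulVf ?scale1r.
Qed.

(* [2 a b a = a (a b + b a) + (a b + b a) a - (a a b + b a a)] *)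
Lemma sqr_closed_sandwich H a b :
  sqr_closed H -> a \in H -> b \in H -> a ** b ** a \in H.
Proof.
move=> sqH aH bH.
have abH := sqr_closed_jordan sqH aH bH.
have := memvZ 2%:R^-1 (memvB (sqr_closed_jordan sqH aH abH)
                                 (sqr_closed_jordan sqH (sqH _ aH) bH)).
rewrite comp_lfunDr comp_lfunDl !comp_lfunA opprD addrACA addrK (addrAC (a ** a ** b)).
by rewrite subrr add0r -mulr2n -scaler_nat scalerA mulVf ?scale1r.
Qed.

Lemma sqr_closed_cross H a b g : sqr_closed H -> a \in H -> b \in H -> g \in H ->
  a ** b = 0 -> b ** a = 0 -> a ** g ** b + b ** g ** a \in H.
Proof.
move=> sqH aH bH gH ab ba; have := sqr_closed_jordan sqH (sqr_closed_jordan sqH aH gH) bH.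
rewrite comp_lfunDl comp_lfunDr !comp_lfunA -!(comp_lfunA _ a b) ab ba.
by rewrite !comp_lfun0r comp_lfun0l addr0 add0r.
Qed.

Lemma cornerv_sub H e : sqr_closed H -> e \in H -> (cornerv e H <= H)%VS.
Proof. by move=> sqH eH; apply/subvP => _ /cornervP [h hH ->]; apply: sqr_closed_sandwich. Qed.

Lemma cornerv_algid H e : e \in H -> e ** e = e -> is_algid e (cornerv e H).
Proof.
move=> eH ee; split; first by apply/cornervP; exists e; rewrite ?ee.
by move=> _ /cornervP [h _ ->]; rewrite !comp_lfunA ee -!comp_lfunA ee.
Qed.

Lemma cornerv_sqr_closed H e :
  sqr_closed H -> e \in H -> e ** e = e -> sqr_closed (cornerv e H).
Proof.
move=> sqH eH ee _ /cornervP [h hH ->]; apply/cornervP.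
exists (h ** e ** h); first exact: sqr_closed_sandwich.
by rewrite !comp_lfunA -(comp_lfunA _ e e) ee.
Qed.

Lemma reducedS H1 H2 : (H1 <= H2)%VS -> reduced H2 -> reduced H1.
Proof. by move=> /subvP sH12 redH2 h /sH12; apply: redH2. Qed.

Lemma cornerv_orth_notin H e g : e ** e = e -> g ** e = 0 -> g != 0 -> g \notin cornerv e H.
Proof.
move=> ee ge; apply: contraNN => /cornervP [h _ gE].
by apply/eqP; rewrite -ge gE -[RHS]comp_lfunA ee.
Qed.

Lemma cornerv_orth H e1 e2 x y :
  e1 ** e2 = 0 -> x \in cornerv e1 H -> y \in cornerv e2 H -> x ** y = 0.
Proof.
move=> e12 /cornervP [g _ ->] /cornervP [k _ ->].
by rewrite !comp_lfunA -(comp_lfunA _ e1 e2) e12 comp_lfun0r !comp_lfun0l.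
Qed.

End SquareClosed.

Lemma linear_poly_ker (K : fieldType) (W : vectType K) (phi : {linear {poly K} -> W}) :
  exists2 p, p != 0 & phi p = 0.
Proof.
pose n := \dim {:W}; pose X := [tuple phi 'X^i | i < n.+1].
have X_dep : ~~ free X by rewrite /free size_tuple ltn_eqF // ltnS dimvS ?subvf.
have [k kX0 [i ki]] : exists2 k : 'I_n.+1 -> K, \sum_i k i *: X`_i = 0 & exists i, k i != 0.
  apply: NNPP => noK; move/freeP: X_dep; apply=> k kX0 i.
  by apply/eqP/negPn/negP => ki; apply: noK; exists k => //; exists i.
exists (\poly_(j < n.+1) k (inord j)).
  by apply/eqP => /(congr1 (coefp i)); rewrite /= coef_poly ltn_ord inord_val coef0; apply/eqP.
rewrite poly_def linear_sum -[RHS]kX0; apply: eq_bigr => j _.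
by rewrite linearZ inord_val -tnth_nth tnth_mktuple.
Qed.

Section CornerPolynomials.
Variables (K : fieldType) (V : vectType K) (u f : 'End(V)).

(* [p(f)] in an algebra with unit [u] containing [f]: constants go to multiples of [u]. *)
Definition cpeval (p : {poly K}) := \sum_(i < size p) p`_i *: iter i (comp_lfun f) u.

Lemma cpeval_widen n (p : {poly K}) :
  (size p <= n)%N -> cpeval p = \sum_(i < n) p`_i *: iter i (comp_lfun f) u.
Proof.
move=> le_p_n; rewrite /cpeval.
rewrite (big_ord_widen n (fun i => p`_i *: iter i (comp_lfun f) u) le_p_n) big_mkcond.
by apply: eq_bigr => i _; case: ltnP => // /(nth_default 0) ->; rewrite scale0r.
Qed.

Fact cpeval_is_linear : linear cpeval.
Proof.
move=> a p q; pose n := maxn (size p) (size q).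
have le_n : (size (a *: p + q)%R <= n)%N.
  rewrite (leq_trans (size_polyD _ _)) // geq_max leq_maxr.
  by rewrite (leq_trans (size_scale_leq _ _)) ?leq_maxl.
rewrite !(@cpeval_widen n) ?leq_maxl ?leq_maxr //.
rewrite scaler_sumr -big_split; apply: eq_bigr => i _.
by rewrite coefD coefZ scalerDl scalerA.
Qed.

HB.instance Definition _ :=
  GRing.isLinear.Build K {poly K} 'End(V) _ cpeval cpeval_is_linear.

Lemma cpevalC c : cpeval c%:P = c *: u.
Proof. by rewrite (@cpeval_widen 1) ?size_polyC_leq1 // big_ord1 coefC. Qed.

Lemma cpevalXM p : cpeval ('X * p) = f ** cpeval p.
Proof.
have le_Xp : (size ('X * p)%R <= (size p).+1)%N.
  by rewrite (leq_trans (size_polyMleq _ _)) // size_polyX.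
rewrite (cpeval_widen le_Xp) big_ord_recl coefXM eqxx scale0r add0r.
rewrite /cpeval comp_lfun_sumr.
by apply: eq_bigr => i _; rewrite coefXM /= -comp_lfunZr.
Qed.

Hypotheses (uu : u ** u = u) (uf : u ** f = f) (fu : f ** u = f).

Lemma cpevalX : cpeval 'X = f.
Proof. by rewrite -['X]mulr1 cpevalXM -[1]/(1%:P) cpevalC scale1r fu. Qed.

Lemma comp_cpeval_unit p : u ** cpeval p = cpeval p.
Proof.
rewrite /cpeval comp_lfun_sumr.
apply: eq_bigr => i _; rewrite -comp_lfunZr; congr (_ *: _).
by case: (nat_of_ord i) => [|j] //=; rewrite comp_lfunA uf.
Qed.

Lemma cpevalM p q : cpeval (p * q) = cpeval p ** cpeval q.
Proof.
elim/poly_ind: p => [|p c IHp]; first by rewrite mul0r linear0 comp_lfun0l.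
rewrite mulrDl (mulrC p 'X) -mulrA mul_polyC !linearD linearZ /= !cpevalXM IHp cpevalC.
by rewrite comp_lfunDl comp_lfunA -comp_lfunZl comp_cpeval_unit.
Qed.

Lemma cpeval_mem H p : (2%:R : K) != 0 ->
  sqr_closed H -> u \in H -> f \in H -> cpeval p \in H.
Proof.
move=> two_neq0 sqH uH fH; elim/poly_ind: p => [|p c IHp]; first by rewrite linear0 mem0v.
rewrite linearD /= (mulrC p) cpevalC cpevalXM memvD ?memvZ // sqr_closed_commute //.
by rewrite -cpevalX -!cpevalM mulrC.
Qed.

Lemma cpeval_sqr_root q l :
  cpeval (q * ('X - l%:P)) = 0 -> cpeval q ** cpeval q = q.[l] *: cpeval q.
Proof.
move=> pf0; have /factor_theorem [s qE] : root (q - q.[l]%:P) l.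
  by rewrite /root hornerD hornerN hornerC subrr.
rewrite -cpevalM -{2}(subrK q.[l]%:P q) qE mulrDr mulrCA (mulrC q (_%:P)) mul_polyC.
by rewrite linearD linearZ /= cpevalM pf0 comp_lfun0r add0r.
Qed.

End CornerPolynomials.

Section Idempotents.
Variables (K : fieldType) (V : vectType K).
Hypotheses (two_neq0 : (2%:R : K) != 0) (closedK : GRing.closed_field_axiom K).
Implicit Types (H : {vspace 'End(V)}) (e f u : 'End(V)).

(* Induction on the size of a polynomial [p] with [p(f) = 0]: split off a
   root [l], [p = q ('X - l)]; then [q(f) / q(l)] is the idempotent unless
   [q(f)] or [q(f) - q(l) u] vanishes, which gives a shorter [p]. *)
Lemma exists_idempotent H u f :
  sqr_closed H -> reduced H -> is_algid u H -> f \in H -> f \notin <[u]>%VS ->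
  exists2 e, e \in H & [/\ e ** e = e, e != 0 & e != u].
Proof.
move=> sqH redH [uH algid_u] fH fNu; have [uf fu] := algid_u f fH.
have uu := (algid_u u uH).1.
have u_neq0 : u != 0 by apply: contraNneq fNu => u0; rewrite -uf u0 comp_lfun0l mem0v.
have cpevalH p : cpeval u f p \in H by apply: cpeval_mem.
have [p p_neq0 /= pf0] := linear_poly_ker (cpeval u f : {linear _ -> _}).
have [n] := ubnP (size p); elim: n p p_neq0 pf0 => // n IHn p p_neq0 pf0 /ltnSE sz_p.
have [l /factor_theorem [q pE]] : exists l, root p l.
  apply/(PreClosedField.closed_rootP closedK).
  apply: contraNneq u_neq0 => /eqP/size_poly1P [c c_neq0 pE].
  by move: pf0; rewrite pE cpevalC => /eqP; rewrite scaler_eq0 (negPf c_neq0).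
have q_neq0 : q != 0 by apply: contraNneq p_neq0 => q0; rewrite pE q0 mul0r.
have sz_q : (size q < n)%N.
  by rewrite (leq_trans _ sz_p) // pE size_Mmonic ?monicXsubC // size_XsubC addn2.
have [qf0 | qf_neq0] := eqVneq (cpeval u f q) 0; first exact: (IHn q).
have qq := cpeval_sqr_root uu uf (etrans (congr1 _ (esym pE)) pf0).
set c := q.[l] in qq.
have c_neq0 : c != 0.
  by apply: contraNneq qf_neq0 => c0; apply/eqP/redH; rewrite ?qq ?c0 ?scale0r.
have [eu | e_neq_u] := eqVneq (c^-1 *: cpeval u f q) u; last first.
  exists (c^-1 *: cpeval u f q); first by rewrite memvZ.
  split=> //; first by rewrite -comp_lfunZl -comp_lfunZr qq !scalerA divfK.
  by rewrite scaler_eq0 invr_eq0 negb_or c_neq0.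
have qcf0 : cpeval u f (q - c%:P) = 0.
  by rewrite linearB /= cpevalC -[X in c *: X]eu scalerA divff // scale1r subrr.
have [qc | qc_neq0] := eqVneq q c%:P.
  move: pf0 fNu; rewrite pE qc mul_polyC linearZ linearB /= cpevalX // cpevalC.
  by move=> /eqP; rewrite scaler_eq0 (negPf c_neq0) subr_eq0 => /eqP ->; rewrite memvZ ?memv_line.
apply: (IHn (q - c%:P)); rewrite ?subr_eq0 // (leq_ltn_trans _ sz_q) //.
rewrite (leq_trans (size_polyD _ _)) // size_polyN geq_max leqnn.
by rewrite (leq_trans (size_polyC_leq1 _)) // size_poly_gt0.
Qed.

End Idempotents.

Definition absolutely_primitive (K : fieldType) (V : vectType K) (H : {vspace 'End(V)}) e :=
  {in H, forall h, exists c, e ** h ** e = c *: e}.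

Section Peirce.
Variables (K : fieldType) (V : vectType K) (H : {vspace 'End(V)}) (a b h : 'End(V)).
Hypotheses (aa : a ** a = a) (bb : b ** b = b) (ab : a ** b = 0) (ba : b ** a = 0).

Let P := a ** h ** b.
Let Q := b ** h ** a.

Let aP : a ** P = P. Proof. by rewrite /P !comp_lfunA aa. Qed.
Let bQ : b ** Q = Q. Proof. by rewrite /Q !comp_lfunA bb. Qed.
Let aQ : a ** Q = 0. Proof. by rewrite /Q !comp_lfunA ab !comp_lfun0l. Qed.
Let bP : b ** P = 0. Proof. by rewrite /P !comp_lfunA ba !comp_lfun0l. Qed.
Let Pb : P ** b = P. Proof. by rewrite /P -comp_lfunA bb. Qed.
Let Qa : Q ** a = Q. Proof. by rewrite /Q -comp_lfunA aa. Qed.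
Let Pa : P ** a = 0. Proof. by rewrite /P -comp_lfunA ba comp_lfun0r. Qed.
Let Qb : Q ** b = 0. Proof. by rewrite /Q -comp_lfunA ab comp_lfun0r. Qed.

Lemma peirce_cross_sqr0 c l : P ** Q = c *: a -> Q ** P = c *: b -> l * l = - c ->
  let z := l *: (a - b) + (P + Q) in z ** z = 0.
Proof.
move=> PQ QP ll z; pose w := a - b.
have ww : w ** w = a + b.
  by rewrite comp_lfun_sqrD !(comp_lfunNl, comp_lfunNr) aa bb ab ba opprK !oppr0 !addr0.
have wx : w ** (P + Q) + (P + Q) ** w = 0.
  rewrite !(comp_lfunDl, comp_lfunDr, comp_lfunNl, comp_lfunNr).
  by rewrite aP aQ bP bQ Pa Qa Pb Qb !(addr0, add0r, oppr0) addrACA subrr addNr addr0.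
have xx : (P + Q) ** (P + Q) = c *: a + c *: b.
  rewrite comp_lfun_sqrD PQ QP /P /Q !comp_lfunA -(comp_lfunA _ b a) -(comp_lfunA _ a b).
  by rewrite ba ab !(comp_lfun0l, comp_lfun0r) !add0r.
rewrite /z comp_lfun_sqrD -!comp_lfunZl -!comp_lfunZr scalerA -scalerDr wx scaler0 addr0.
by rewrite ww xx -scalerDr -scalerDl ll addNr scale0r.
Qed.

Lemma peirce_cross_sandwich l : a ** (l *: (a - b) + (P + Q)) ** b = P.
Proof.
rewrite comp_lfunDr comp_lfunDl -comp_lfunZr -comp_lfunZl (comp_lfunDr a a).
rewrite comp_lfunNr aa ab oppr0 addr0 ab scaler0 add0r.
by rewrite comp_lfunDr comp_lfunDl aP aQ Pb comp_lfun0l addr0.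
Qed.

Hypotheses (two_neq0 : (2%:R : K) != 0) (closedK : GRing.closed_field_axiom K).
Hypotheses (sqH : sqr_closed H) (redH : reduced H) (aH : a \in H) (bH : b \in H) (hH : h \in H).

(* [P Q] and [Q P] are multiples [c a] and [c' b] with [c P = c' P]; if [c = c'],
   a square root [l] of [- c] makes [l (a - b) + P + Q] square to zero. *)
Lemma absolutely_primitive_orth_comp0 :
  absolutely_primitive H a -> absolutely_primitive H b -> a ** h ** b = 0.
Proof.
move=> prim_a prim_b; rewrite -/P.
have [c PQ] : exists c, P ** Q = c *: a.
  have [c hc] := prim_a _ (sqr_closed_sandwich two_neq0 sqH hH bH).
  by exists c; rewrite -hc /P /Q !comp_lfunA -(comp_lfunA _ b b) bb.
have [c' QP] : exists c', Q ** P = c' *: b.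
  have [c' hc'] := prim_b _ (sqr_closed_sandwich two_neq0 sqH hH aH).
  by exists c'; rewrite -hc' /P /Q !comp_lfunA -(comp_lfunA _ a a) aa.
have cP : c *: P = c' *: P.
  by rewrite -[in LHS]aP comp_lfunZl -PQ -comp_lfunA QP -comp_lfunZr Pb.
have [eq_cc' | c_neq_c'] := eqVneq c c'; last first.
  by move/eqP: cP; rewrite -subr_eq0 -scalerBl scaler_eq0 subr_eq0 (negPf c_neq_c') => /eqP.
rewrite -{c' cP}eq_cc' in QP.
have [l ll] : exists l : K, l * l = - c.
  have /(PreClosedField.closed_rootP closedK) [l /rootP] : size ('X^2 + c%:P) != 1.
    by rewrite size_XnaddC.
  by rewrite !hornerE => /eqP; rewrite addr_eq0 => /eqP; exists l.
have zH : l *: (a - b) + (P + Q) \in H by rewrite memvD ?memvZ ?memvB ?sqr_closed_cross.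
have z0 := redH zH (peirce_cross_sqr0 PQ QP ll).
by rewrite -(peirce_cross_sandwich l) z0 comp_lfun0r comp_lfun0l.
Qed.

End Peirce.

Section OrthogonalIdempotents.
Variables (K : fieldType) (V : vectType K) (s : seq 'End(V)).
Hypotheses (s_uniq : uniq s) (s_idem : {in s, forall x, x ** x = x})
  (s_orth : {in s &, forall x y, x != y -> x ** y = 0}).

Lemma comp_nth_orth_idem (c : 'I_(size s) -> K) (i : 'I_(size s)) :
  s`_i ** (\sum_j c j *: s`_j) = c i *: s`_i.
Proof.
rewrite comp_lfun_sumr (bigD1 i) //= big1 ?addr0 => [|j ji]; rewrite -comp_lfunZr.
  by rewrite s_idem ?mem_nth.
by rewrite s_orth ?mem_nth ?scaler0 // nth_uniq // eq_sym.
Qed.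

Lemma comp_orth_idem_nth (c : 'I_(size s) -> K) (i : 'I_(size s)) :
  (\sum_j c j *: s`_j) ** s`_i = c i *: s`_i.
Proof.
rewrite comp_lfun_suml (bigD1 i) //= big1 ?addr0 => [|j ji]; rewrite -comp_lfunZl.
  by rewrite s_idem ?mem_nth.
by rewrite s_orth ?mem_nth ?scaler0 // nth_uniq.
Qed.

Lemma comp_orth_idem_sum (c d : 'I_(size s) -> K) :
  (\sum_j c j *: s`_j) ** (\sum_j d j *: s`_j) = \sum_j (c j * d j) *: s`_j.
Proof.
rewrite comp_lfun_sumr; apply: eq_bigr => j _.
by rewrite -comp_lfunZr comp_orth_idem_nth scalerA mulrC.
Qed.

Lemma free_orth_idem : 0 \notin s -> free s.
Proof.
move=> s0; change (free (in_tuple s)); apply/freeP => c c0 i.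
have /eqP := congr1 (comp_lfun s`_i) c0.
rewrite comp_nth_orth_idem comp_lfun0r scaler_eq0 => /orP [/eqP //|].
by move=> /eqP si0; move: s0; rewrite -si0 mem_nth.
Qed.

End OrthogonalIdempotents.

Definition orth_idem_basis (K : fieldType) (V : vectType K) (H : {vspace 'End(V)}) s :=
  [/\ uniq s, {in s, forall x, x ** x = x}, 0 \notin s,
      {in s &, forall x y, x != y -> x ** y = 0} & <<s>>%VS = H].

Section OrthIdemBasis.
Variables (K : fieldType) (V : vectType K).
Implicit Types (H : {vspace 'End(V)}) (e u : 'End(V)) (s : seq 'End(V)).

Lemma orth_idem_basis_sum H u s :
  is_algid u H -> orth_idem_basis H s -> \sum_(x <- s) x = u.
Proof.
move=> [uH algid_u] [s_uniq s_idem _ s_orth sE].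
have /coord_span uE : u \in <<in_tuple s>>%VS by rewrite [<<_>>%VS]sE.
rewrite (big_nth 0) big_mkord {1}uE; apply: eq_bigr => i _.
have siH : s`_i \in H by rewrite -sE memv_span ?mem_nth.
by rewrite -{1}(algid_u _ siH).2 {1}uE comp_nth_orth_idem.
Qed.

Lemma orth_idem_basis_primitive H s x :
  orth_idem_basis H s -> x \in s -> absolutely_primitive H x.
Proof.
move=> [s_uniq s_idem _ s_orth <-] /(nthP 0) [i lt_i <-] h hs.
have /coord_span -> : h \in <<in_tuple s>>%VS := hs.
exists (coord (in_tuple s) (Ordinal lt_i) h).
by rewrite (comp_nth_orth_idem s_uniq s_idem s_orth _ (Ordinal lt_i)) -comp_lfunZl s_idem ?mem_nth.
Qed.

Lemma absolutely_primitive_cornerv H e a :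
  e \in H -> e ** e = e -> a \in cornerv e H ->
  absolutely_primitive (cornerv e H) a -> absolutely_primitive H a.
Proof.
move=> eH ee aHe prim_a k kH; have [ea ae] := (cornerv_algid eH ee).2 a aHe.
have [|c hc] := prim_a (e ** k ** e); first by apply/cornervP; exists k.
by exists c; rewrite -hc !comp_lfunA ae -(comp_lfunA _ e a) ea.
Qed.

Lemma orth_idem_basis_line H u :
  is_algid u H -> (H <= <[u]>)%VS -> exists s, orth_idem_basis H s.
Proof.
move=> [uH algid_u] sHu; have Hu : H = <[u]>%VS by apply/eqP; rewrite eqEsubv sHu -memvE.
have [u0 | u_neq0] := eqVneq u 0.
  exists [::]; split=> //; rewrite span_nil Hu u0; apply/eqP.
  by rewrite eq_sym -dimv_eq0 dim_vline eqxx.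
exists [:: u]; split=> //; rewrite ?inE 1?eq_sym ?span_seq1 //.
  by move=> x /[!inE] /eqP ->; apply: (algid_u u uH).1.
by move=> x y /[!inE] /eqP -> /eqP ->; rewrite eqxx.
Qed.

End OrthIdemBasis.

Section Diagonalization.
Variables (K : fieldType) (V : vectType K).
Hypotheses (two_neq0 : (2%:R : K) != 0) (closedK : GRing.closed_field_axiom K).
Implicit Types (H : {vspace 'End(V)}) (e u : 'End(V)) (s : seq 'End(V)).

Lemma cornerv_cross_comp0 H e1 e2 s1 s2 h :
  sqr_closed H -> reduced H -> e1 \in H -> e2 \in H ->
  e1 ** e1 = e1 -> e2 ** e2 = e2 -> e1 ** e2 = 0 -> e2 ** e1 = 0 ->
  orth_idem_basis (cornerv e1 H) s1 -> orth_idem_basis (cornerv e2 H) s2 ->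
  h \in H -> e1 ** h ** e2 = 0.
Proof.
move=> sqH redH e1H e2H ee1 ee2 e12 e21 B1 B2 hH.
have [_ idem1 _ _ sE1] := B1; have [_ idem2 _ _ sE2] := B2.
have in1 a : a \in s1 -> a \in cornerv e1 H by rewrite -sE1 => /memv_span.
have in2 b : b \in s2 -> b \in cornerv e2 H by rewrite -sE2 => /memv_span.
have sub1 := cornerv_sub two_neq0 sqH e1H; have sub2 := cornerv_sub two_neq0 sqH e2H.
rewrite -(orth_idem_basis_sum (cornerv_algid e1H ee1) B1).
rewrite -(orth_idem_basis_sum (cornerv_algid e2H ee2) B2).
rewrite comp_lfun_sumr big1_seq // => b /andP [_ bs2]; rewrite !comp_lfun_suml.
rewrite big1_seq // => a /andP [_ as1].
have a1 := in1 a as1; have b2 := in2 b bs2.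
apply: (absolutely_primitive_orth_comp0 (idem1 a as1) (idem2 b bs2)
  (cornerv_orth e12 a1 b2) (cornerv_orth e21 b2 a1) two_neq0 closedK sqH redH).
- exact: (subvP sub1 _ a1).
- exact: (subvP sub2 _ b2).
- exact: hH.
- exact: absolutely_primitive_cornerv e1H ee1 a1 (orth_idem_basis_primitive B1 as1).
exact: absolutely_primitive_cornerv e2H ee2 b2 (orth_idem_basis_primitive B2 bs2).
Qed.

Lemma orth_idem_basis_cat H e1 e2 s1 s2 :
  sqr_closed H -> reduced H -> is_algid (e1 + e2) H -> e1 \in H -> e2 \in H ->
  e1 ** e1 = e1 -> e2 ** e2 = e2 -> e1 ** e2 = 0 -> e2 ** e1 = 0 ->
  orth_idem_basis (cornerv e1 H) s1 -> orth_idem_basis (cornerv e2 H) s2 ->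
  orth_idem_basis H (s1 ++ s2).
Proof.
move=> sqH redH [_ algid_u] e1H e2H ee1 ee2 e12 e21 B1 B2.
have cross12 := cornerv_cross_comp0 sqH redH e1H e2H ee1 ee2 e12 e21 B1 B2.
have cross21 := cornerv_cross_comp0 sqH redH e2H e1H ee2 ee1 e21 e12 B2 B1.
have [uniq1 idem1 s1_0 orth1 sE1] := B1; have [uniq2 idem2 s2_0 orth2 sE2] := B2.
have in1 a : a \in s1 -> a \in cornerv e1 H by rewrite -sE1 => /memv_span.
have in2 b : b \in s2 -> b \in cornerv e2 H by rewrite -sE2 => /memv_span.
have orth12 a b : a \in s1 -> b \in s2 -> a ** b = 0 /\ b ** a = 0.
  move=> /in1 as1 /in2 bs2.
  by split; [apply: cornerv_orth e12 as1 bs2 | apply: cornerv_orth e21 bs2 as1].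
split.
- rewrite cat_uniq uniq1 uniq2 andbT; apply/hasPn => x xs2; apply/negP => xs1.
  have := (orth12 x x xs1 xs2).1; rewrite idem1 // => x0.
  by move: s1_0; rewrite -x0 xs1.
- by move=> x; rewrite mem_cat => /orP [/idem1 | /idem2].
- by rewrite mem_cat negb_or s1_0.
- move=> x y; rewrite !mem_cat => /orP [xs | xs] /orP [ys | ys]; first exact: orth1.
  + by move=> _; apply: (orth12 x y xs ys).1.
  + by move=> _; apply: (orth12 y x ys xs).2.
  exact: orth2.
rewrite span_cat sE1 sE2; apply/eqP; rewrite eqEsubv subv_add.
rewrite !cornerv_sub //=; apply/subvP => h hH.
have hE : h = e1 ** h ** e1 + e2 ** h ** e2.
  have [uh hu] := algid_u h hH.
  rewrite -{1}uh -{1}hu !(comp_lfunDl, comp_lfunDr) !comp_lfunA.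
  by rewrite cross12 // cross21 // addr0 add0r.
by rewrite hE memv_add //; apply/cornervP; exists h.
Qed.

Lemma exists_orth_idem_basis H u :
  sqr_closed H -> reduced H -> is_algid u H -> exists s, orth_idem_basis H s.
Proof.
have [n] := ubnP (\dim H); elim: n H u => // n IHn H u /ltnSE dimH sqH redH algid_u.
have [uH algid_uH] := algid_u.
have [[f fH fNu] | allHu] := classic (exists2 f, f \in H & f \notin <[u]>%VS); last first.
  apply: (orth_idem_basis_line algid_u); apply/subvP => f fH.
  by apply: contra_notT allHu => fNu; exists f.
have [e eH [ee e_neq0 e_neq_u]] := exists_idempotent two_neq0 closedK sqH redH algid_u fH fNu.
have [ue eu] := algid_uH e eH.
pose e' := u - e; have e'H : e' \in H by rewrite memvB.
have ee' : e ** e' = 0 by rewrite comp_lfunDr comp_lfunNr eu ee subrr.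
have e'e : e' ** e = 0 by rewrite comp_lfunDl comp_lfunNl ue ee subrr.
have e'e' : e' ** e' = e'.
  by rewrite {1}/e' comp_lfunDl comp_lfunNl ee' subr0; apply: (algid_uH _ e'H).1.
have e'_neq0 : e' != 0 by rewrite subr_eq0 eq_sym.
have IHcorner g g' : g \in H -> g ** g = g -> g' \in H -> g' ** g = 0 -> g' != 0 ->
    exists s, orth_idem_basis (cornerv g H) s.
  move=> gH gg g'H g'g g'_neq0; have sub_gH := cornerv_sub two_neq0 sqH gH.
  apply: (IHn _ g); last exact: cornerv_algid.
  - by rewrite (leq_trans _ dimH) // (ltn_dimv sub_gH g'H) // cornerv_orth_notin.
  - exact: cornerv_sqr_closed.
  exact: reducedS sub_gH redH.
have [s1 B1] := IHcorner e e' eH ee e'H e'e e'_neq0.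
have [s2 B2] := IHcorner e' e e'H e'e' eH ee' e_neq0.
by exists (s1 ++ s2); apply: orth_idem_basis_cat B1 B2 => //; rewrite /e' subrKC.
Qed.

Lemma homlie_iso_Kn_of_basis (br : V -> V -> V) H s :
  (forall f, f \in H <-> is_homlie br f) -> orth_idem_basis H s -> homlie_iso_Kn br.
Proof.
move=> HE [s_uniq s_idem s0 s_orth sE].
have s_free := free_orth_idem s_uniq s_idem s_orth s0.
have inS f : is_homlie br f -> f \in <<in_tuple s>>%VS by rewrite /= sE => /HE.
exists (size s), (fun f => \row_i coord (in_tuple s) i f); split.
- by move=> a f g _ _; apply/rowP => i; rewrite !mxE linearP.
- move=> f g /inS/coord_span fE /inS/coord_span gE eq_fg; rewrite fE gE.
  by apply: eq_bigr => i _; have /rowP/(_ i) := eq_fg; rewrite !mxE => ->.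
- move=> r; exists (\sum_i r 0 i *: s`_i); split.
    apply/HE; rewrite -sE; apply: memv_suml => i _.
    by rewrite memvZ ?memv_span ?mem_nth.
  by apply/rowP => i; rewrite mxE coord_sum_free.
move=> f g /inS/coord_span fE /inS/coord_span gE; apply/rowP => i; rewrite !mxE.
pose c j := coord (in_tuple s) j f * coord (in_tuple s) j g.
have fg : f ** g = \sum_j c j *: s`_j by rewrite {1}fE {1}gE comp_orth_idem_sum.
have gf : g ** f = \sum_j c j *: s`_j.
  by rewrite {1}fE {1}gE comp_orth_idem_sum //; apply: eq_bigr => j _; rewrite mulrC.
by rewrite jmul_commute ?fg ?gf // coord_sum_free.
Qed.

End Diagonalization.

Unset Implicit Arguments.

Theorem proposition2p4 (K : fieldType) (V : vectType K) (br : V -> V -> V) :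
  (2%:R : K) != 0 ->
  is_lie br ->
  (forall f g, is_homlie br f -> is_homlie br g -> is_homlie br (jmul f g)) ->
  ((homlie_semisimple br /\ homlie_no_nilpotent br) \/ cond_ii br) /\
  (GRing.closed_field_axiom K -> homlie_iso_Kn br \/ cond_ii br).
Proof.
move=> two_neq0 br_lie homlie_jmul.
have [[psi hpsi [psi_neq0 psi2]] | noSqr0] :=
  classic (exists2 psi, is_homlie br psi & psi != 0 /\ psi ** psi = 0).
  by have cii := cond_ii_of_sqr0 br_lie hpsi psi_neq0 psi2; split; right.
have red : homlie_reduced br.
  by move=> f hf ff; apply/eqP/negPn/negP => f_neq0; apply: noSqr0; exists f.
split.
  by left; split; [apply: homlie_semisimple_of_reduced | apply: homlie_no_nilpotent_of_reduced].
move=> closedK; left.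
have [H HE] := vspace_of_linear_pred (homlie0 br_lie) (homlie_lin br_lie).
have [s B] : exists s, orth_idem_basis H s.
  apply: (exists_orth_idem_basis two_neq0 closedK (u := \1%VF)).
  - by move=> f /HE/(homlie_sqr two_neq0 homlie_jmul)/HE.
  - by move=> f /HE; apply: red.
  by split=> [|h _]; [apply/HE/homlie_id | rewrite comp_lfun1l comp_lfun1r].
exact: homlie_iso_Kn_of_basis B.
Qed.
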